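(* For $n\ge1$, the upper left $n\times n$ block of $M_n$ has $(i,j)$ entry equal to $1$ if $i=n$; equal to $1$ if $i\neq n$ and $j\le n-i$; and equal to $2$ if $i\ne n$ and $j>n-i$.
   Context: Lagrangian Grassmannian: $X=\mathrm{LGr}(n,2n)$, the $n$-dimensional subspaces of $\mathbb C^{2n}$ Lagrangian for $\omega_{ij}=(-1)^j\delta_{i,2n+1-j}$, in its Plücker embedding; $\mathbb C[X]$ its homogeneous coordinate ring. Plücker coordinates $p_I$ ($I$ an $n$-subset of $[2n]$) are indexed by Young diagrams in the $n\times n$ square: along the lattice path from the upper right to the lower left corner with unit steps (down or left) labelled $1,\dots,2n$, $\lambda_I$ is the diagram above the path whose vertical steps are labelled by $I$; $p_{\lambda_I}=p_I$. Valuation: for $0\le a,b\le n$ let $\mu_{a,b}=(n^a,b^{n-a})$; $\mu_{a,b}^T=\mu_{b,a}$. The co-rectangles symmetric plabic graph $G=G^{\text{co-rect}}_n$ is a reduced plabic graph with boundary vertices $1,\dots,2n$ clockwise, symmetric (in Karpman's sense) with respect to a diameter $d$ with endpoints between $2n$ and $1$ and between $n$ and $n+1$, whose faces (Rietsch–Williams labelling, translated to Young diagrams) are exactly the $\mu_{a,b}$, reflection in $d$ exchanging faces $\mu,\mu^T$. With $O$ the unique perfect orientation with source set $\{1,\dots,n\}$, the flow polynomial $P_J$ is the sum over flows from $[n]$ to $J$ (vertex-disjoint paths from $[n]\setminus J$ to $J\setminus[n]$) of the product over paths of the face variables $x_\mu$ to the left of the path. With $x_\mu=x_{\mu^T}$,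 $p_J\mapsto P_J$ embeds $\mathbb C[X]$ into Laurent polynomials; $\mathrm{val}_{\text{co-rect}}(f)$ is the exponent vector of the lexicographically minimal term (for a fixed total order of variables), with coordinates indexed by transpose-orbits of nonempty face labels, so values lie in $\mathbb Z^{\binom{n+1}{2}}$. Matrix $M_n$: for $0\le i\le j\le n-1$ let $\lambda^{(i,j)}=(n^j,(n-1)^{n-1-j},i)$. $M_n$ is the $\binom{n+1}{2}\times\binom{n+1}{2}$ matrix whose columns are $\mathrm{val}_{\text{co-rect}}(p_{\lambda^{(i,j)}})$, ordered by $(i,j)<(i',j')$ iff $i<i'$, or $i=i'$ and $j>j'$; rows are indexed by the transpose-orbits of nonempty face labels, represented by $n$-subsets of $[2n]$, ordered so that the subset with the larger entry at the first difference (comparing largest elements, then second largest, etc.) comes first. (In particular the first $n$ rows are indexed by $(n^k)$, $k=1,\dots,n-1$, and the hook $(n,1^{n-1})$.) *)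

From HB Require Import structures.
From mathcomp Require Import all_boot all_order all_algebra.
From mathcomp Require Import mpoly.

Set Implicit Arguments.
Unset Strict Implicit.
Unset Printing Implicit Defensive.

Import GRing.Theory.

(* Young diagrams in the n x n square are encoded by their n row lengths     *)
(* (weakly decreasing, padded with zeros).                                   *)

Definition mu (n a b : nat) : seq nat := nseq a n ++ nseq (n - a) b.

Definition transp (n : nat) (l : seq nat) : seq nat :=
  [seq count (fun x => c < x) l | c <- iota 0 n].

(* The n-subset I of [2n] with lambda_I = l: along the lattice path from the
   upper right to the lower left corner (steps labelled 1..2n), the vertical
   step bordering row r (1-based) has label r + (n - l_r). *)
Definition subset_of (n : nat) (l : seq nat) : seq nat :=
  [seq r.+1 + (n - nth 0 l r) | r <- iota 0 n].

Fixpoint lexlt (s t : seq nat) : bool :=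
  match s, t with
  | x :: s', y :: t' => (x < y) || ((x == y) && lexlt s' t')
  | [::], _ :: _ => true
  | _, _ => false
  end.
Definition lexle (s t : seq nat) : bool := ~~ lexlt t s.

Definition lexmin (s : seq (seq nat)) : option (seq nat) :=
  foldr (fun x acc => if acc is Some y then Some (if lexle x y then x else y)
                      else Some x) None s.

(* Rows: transpose-orbits of nonempty face labels, ordered as in the paper.  *)
(* An n-subset is compared through its elements listed in decreasing order  *)
(* (largest first); an orbit {mu, mu^T} is represented by the larger of its  *)
(* two subsets, and the orbit with the larger representative comes first.   *)

Definition dkey (n : nat) (l : seq nat) : seq nat := rev (subset_of n l).

Definition orep (n : nat) (l : seq nat) : seq nat :=
  if lexlt (dkey n l) (dkey n (transp n l)) then dkey n (transp n l)
  else dkey n l.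

(* the face labels of G^{co-rect}_n : all mu_{a,b}, 0 <= a,b <= n *)
Definition face_labels (n : nat) : seq (seq nat) :=
  flatten [seq [seq mu n a b | b <- iota 0 n.+1] | a <- iota 0 n.+1].

Definition nonempty (l : seq nat) : bool := has (fun x => 0 < x) l.

Definition rows (n : nat) : seq (seq nat) :=
  sort (fun u v => lexle v u)
       (undup [seq orep n l | l <- face_labels n & nonempty l]).

(* The co-rectangles plabic graph G = G^{co-rect}_n with its perfect         *)
(* orientation O (source set {1,..,n}).                                      *)
(* Picture the n x n grid of boxes (r,c), 1 <= r,c <= n, r counted from the *)
(* top and c from the left.  Each box carries a black vertex Blk r c and a   *)
(* white vertex Wht r c joined by an edge.  Edges: Blk r c -- Wht r c;       *)
(* Wht r c -- Blk (r-1) c (north neighbour); Wht r c -- Blk r (c+1) (east   *)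
(* neighbour).  Boundary vertices (clockwise): 1,..,n along the bottom side *)
(* from right to left, with Bd s -- Blk n (n+1-s); then n+1,..,2n down the  *)
(* right side, with Wht r n -- Bd (n+r).  The unique perfect orientation    *)
(* with source set [n] (each black vertex has exactly one outgoing edge,    *)
(* each white vertex exactly one incoming edge) orients every edge          *)
(* northwards / eastwards, as encoded in [edge] below.                       *)
(* Faces: for 0 <= x,y <= n let F(x,y) be the region between the column    *)
(* lines c = x and c = x+1 and the row lines r = y and r = y+1 (all F(x,y)  *)
(* with x = 0 or y = 0 form one single face, the one between boundary      *)
(* vertices n and n+1).  With the Rietsch-Williams labelling (i is put in  *)
(* the label of every face to the left of the trip starting at i, trips    *)
(* turning maximally right at black and maximally left at white vertices)  *)
(* the face F(x,y) is labelled mu_{n-x,n-y}.  Reflection in the diagonal   *)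
(* from the corner between 2n and 1 (bottom right) to the corner between   *)
(* n and n+1 (top left) maps G to itself with colours swapped and exchanges*)
(* F(x,y) and F(y,x), i.e. mu and mu^T.                                     *)

Inductive vtx : Type :=
| Bd of nat
| Blk of nat & nat
| Wht of nat & nat.

Definition vtx_code (v : vtx) : nat * nat * nat :=
  match v with Bd i => (0, i, 0) | Blk r c => (1, r, c) | Wht r c => (2, r, c) end.
Definition vtx_decode (x : nat * nat * nat) : vtx :=
  match x with
  | (0, i, _) => Bd i | (1, r, c) => Blk r c | (_, r, c) => Wht r c end.
Lemma vtx_codeK : cancel vtx_code vtx_decode. Proof. by case. Qed.
HB.instance Definition _ := Equality.copy vtx (can_type vtx_codeK).

Definition edge (n : nat) (u v : vtx) : bool :=
  match u, v with
  | Bd s, Blk r c => [&& 1 <= s <= n, r == n & c == n.+1 - s]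
  | Blk r c, Wht r' c' => [&& 1 <= r <= n, 1 <= c <= n, r' == r & c' == c]
  | Wht r c, Blk r' c' =>
      [&& 1 <= r <= n, 1 <= c <= n &
          [&& 1 < r, r' == r.-1 & c' == c] || [&& c < n, r' == r & c' == c.+1]]
  | Wht r c, Bd t => [&& 1 <= r <= n, c == n & t == n + r]
  | _, _ => false
  end.

Definition verts (n : nat) : seq vtx :=
  [seq Bd i | i <- iota 1 (2 * n)] ++
  flatten [seq flatten [seq [:: Blk r c; Wht r c] | c <- iota 1 n] | r <- iota 1 n].

Definition succs (n : nat) (v : vtx) : seq vtx := [seq w <- verts n | edge n v w].

(* The fuel
   exceeds the number of vertices, so (O being acyclic) nothing is cut off. *)
Fixpoint paths_from (n fuel : nat) (v : vtx) : seq (seq vtx) :=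
  match fuel with
  | 0 => [::]
  | fuel'.+1 =>
      flatten [seq (if w is Bd _ then [:: [:: w]]
                    else [seq w :: p | p <- paths_from n fuel' w]) | w <- succs n v]
  end.

Definition paths (n s : nat) : seq (seq vtx) :=
  [seq Bd s :: p | p <- paths_from n (2 * n * n + 2) (Bd s)].

Fixpoint cprod (T : Type) (ss : seq (seq T)) : seq (seq T) :=
  match ss with
  | [::] => [:: [::]]
  | s :: ss' => flatten [seq [seq x :: f | f <- cprod ss'] | x <- s]
  end.

Definition sources (n : nat) (J : seq nat) : seq nat := [seq s <- iota 1 n | s \notin J].
Definition sinks (n : nat) (J : seq nat) : seq nat := [seq t <- J | n < t].

Definition flows (n : nat) (J : seq nat) : seq (seq (seq vtx)) :=
  [seq F <- cprod [seq paths n s | s <- sources n J]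
     | perm_eq [seq last (Bd 0) P | P <- F] [seq Bd t | t <- sinks n J]
       && uniq (flatten F)].

(* position in the grid: box (r,c); boundary sources sit just below the grid,
   boundary sinks just right of it *)
Definition pos (n : nat) (v : vtx) : nat * nat :=
  match v with
  | Bd i => if i <= n then (n.+1, n.+1 - i) else (i - n, n.+1)
  | Blk r c => (r, c)
  | Wht r c => (r, c)
  end.

(* Labels of the faces to the left of a path P (paths run north/east from
   the bottom side to the right side, so the faces to their left are those
   lying north-west of them): F(x,y) is to the left of P iff some point of P
   lies strictly south-east of F(x,y). *)
Definition left_faces (n : nat) (P : seq vtx) : seq (seq nat) :=
  undup (flatten [seq [seq mu n (n - x) (n - y) |
                        y <- iota 0 n.+1 & has (fun v => (y < (pos n v).1) && (x < (pos n v).2)) P]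
                  | x <- iota 0 n.+1]).

(* number of variables = number of transpose-orbits of nonempty labels *)
Definition nvar (n : nat) : nat := 'C(n.+1, 2).

(* exponent of the i-th orbit variable in the weight of the flow F
   (face variables x_mu = x_{mu^T}; the empty face carries no variable) *)
Definition flow_exp (n : nat) (F : seq (seq vtx)) (i : nat) : nat :=
  \sum_(P <- F) count (fun l => nonempty l && (orep n l == nth [::] (rows n) i))
                      (left_faces n P).

Definition flow_mon (n : nat) (F : seq (seq vtx)) : 'X_{1..nvar n} :=
  [multinom flow_exp n F i | i < nvar n].

Definition flowpoly (n : nat) (J : seq nat) : {mpoly int[nvar n]} :=
  \sum_(F <- flows n J) 'X_[flow_mon n F].

(* val_{co-rect}(p_J): exponent vector of the lexicographically minimal
   term of P_J, variables ordered as the rows (first row most significant) *)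
Definition val_corect (n : nat) (J : seq nat) : seq nat :=
  odflt [::] (lexmin [seq [seq (m : 'X_{1..nvar n}) i | i <- enum 'I_(nvar n)]
                     | m <- msupp (flowpoly n J)]).

(* columns: lambda^{(i,j)} = (n^j, (n-1)^(n-1-j), i), 0 <= i <= j <= n-1, in
   the order (i,j) < (i',j') iff i < i' or (i = i' and j > j') *)
Definition col_index (n : nat) : seq (nat * nat) :=
  flatten [seq [seq (i, j) | j <- rev (iota i (n - i))] | i <- iota 0 n].

Definition lam (n i j : nat) : seq nat := nseq j n ++ nseq (n - 1 - j) (n - 1) ++ [:: i].

(* the matrix M_n (entries indexed from 0) *)
Definition Mn (n : nat) : 'M[nat]_(nvar n) :=
  \matrix_(r < nvar n, c < nvar n)
    let ij := nth (0, 0) (col_index n) c in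
    nth 0 (val_corect n (subset_of n (lam n ij.1 ij.2))) r.

(* Column j < n of M_n is val(p_J) for lambda^(0,k) = (n^k, (n-1)^(n-1-k), 0), k = n-1-j,
   whose subset is J = ([n] \ {k+1}) U {2n}.  A flow from [n] to J is therefore a
   single path from the boundary vertex k+1 to 2n; since 2n is only entered from the
   bottom right box and edges of O never go south, that path runs east along the
   bottom row.  So P_J is a monomial and the column is its exponent vector.
   Listing the transpose orbits by their subsets in decreasing order, the first n
   rows are the orbits of the rectangles (n^c), 1 <= c < n, and then the hook
   (n, 1^(n-1)).  The faces to the left of the bottom path are the F(x,y) with
   y < n or x < n - k; the orbit {(n^c), (c^n)} meets them in (c^n) always and in
   (n^c) exactly when k < c, and the orbit of the hook meets them once. *)

From mathcomp Require Import all_boot all_order all_algebra.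
From mathcomp Require Import mpoly.
From mathcomp Require Import zify.

Set Implicit Arguments.
Unset Strict Implicit.
Unset Printing Implicit Defensive.

Import GRing.Theory.

Lemma count_pred2_uniq (T : eqType) (s : seq T) x y : uniq s -> x != y ->
  count (pred2 x y) s = (x \in s) + (y \in s).
Proof.
move=> uniq_s ne_xy; have := count_predUI (pred1 x) (pred1 y) s.
rewrite (@eq_count _ (predI _ _) pred0) => [|z /=]; last first.
  by case: (eqVneq z x) => // ->; rewrite (negbTE ne_xy).
by rewrite count_pred0 addn0 !count_uniq_mem // => <-.
Qed.

Lemma count_mem_subset_uniq (T : eqType) (s t : seq T) :
  uniq s -> uniq t -> {subset t <= s} -> count (mem t) s = size t.
Proof.
move=> uniq_s uniq_t sub_ts; rewrite -size_filter; apply/perm_size/uniq_perm => [||x].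
- exact: filter_uniq.
- exact: uniq_t.
- by rewrite mem_filter andb_idr //; apply: sub_ts.
Qed.

Section LexOrder.

Implicit Types s t u : seq nat.

Lemma lexlt_irr s : lexlt s s = false.
Proof. by elim: s => //= x s ->; rewrite ltnn eqxx. Qed.

Lemma lexlt_asym s t : lexlt s t -> lexlt t s = false.
Proof.
elim: s t => [|x s IH] [|y t] //= /orP[lt_xy | /andP[/eqP-> lt_st]].
  by rewrite ltnNge (ltnW lt_xy) gtn_eqF.
by rewrite ltnn eqxx IH.
Qed.

Lemma lexlt_trans s t u : lexlt s t -> lexlt t u -> lexlt s u.
Proof.
elim: s t u => [|x s IH] [|y t] [|z u] //=.
case/orP => [lt_xy | /andP[/eqP-> lt_st]]; case/orP => [lt_yz | /andP[/eqP<- lt_tu]].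
- by rewrite (ltn_trans lt_xy lt_yz).
- by rewrite lt_xy.
- by rewrite lt_yz.
- by rewrite eqxx (IH _ _ lt_st lt_tu) orbT.
Qed.

Lemma lexlt_total s t : s != t -> lexlt s t || lexlt t s.
Proof.
elim: s t => [|x s IH] [|y t] //=.
by case: (ltngtP x y) => //= <-; rewrite eqseq_cons eqxx; apply: IH.
Qed.

Lemma lexlt_le_trans s t u : lexlt s t -> lexle t u -> lexlt s u.
Proof.
move=> lt_st; rewrite /lexle; case: (eqVneq t u) => [<- // | ne_tu].
by case/orP: (lexlt_total ne_tu) => [/(lexlt_trans lt_st) | ->].
Qed.

Lemma lexle_trans : transitive lexle.
Proof.
move=> t s u le_st le_tu; rewrite /lexle; apply/negP => lt_us.
by move: le_tu; rewrite /lexle (lexlt_le_trans lt_us le_st).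
Qed.

Lemma lexle_total : total lexle.
Proof. by move=> s t; rewrite /lexle -negb_and; apply/negP => /andP[/lexlt_asym->]. Qed.

Lemma lexlt_map_iota (f g : nat -> nat) m N k :
  m <= k < m + N -> f k < g k -> (forall i, m <= i < k -> f i = g i) ->
  lexlt (map f (iota m N)) (map g (iota m N)).
Proof.
elim: N m => [|N IH] m k_bnd; first by lia.
move=> lt_fg eq_fg /=; case: (eqVneq k m) => [<- | ne_km]; first by rewrite lt_fg.
rewrite eq_fg; last by lia.
rewrite ltnn eqxx /=; apply: IH lt_fg _ => [|i i_bnd]; first by lia.
by apply: eq_fg; lia.
Qed.

Definition lexge s t := lexle t s.

Lemma lexge_trans : transitive lexge.
Proof. by move=> t s u /= le_ts le_ut; apply: lexle_trans le_ut le_ts. Qed.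

Lemma index_lexge_sorted (r : seq (seq nat)) s :
  sorted lexge r -> uniq r -> s \in r -> index s r = count (lexlt s) r.
Proof.
elim: r => //= t r IH sorted_r /andP[t_notin uniq_r].
have le_t : all (lexle^~ t) r := order_path_min lexge_trans sorted_r.
case: (eqVneq t s) => [<- _ | ne_ts].
  rewrite lexlt_irr (@eq_in_count _ _ pred0) ?count_pred0 //.
  by move=> u /(allP le_t); rewrite /lexle => /negbTE ->.
rewrite in_cons eq_sym (negbTE ne_ts) /= => s_in.
have lt_st : lexlt s t.
  case/orP: (lexlt_total ne_ts) => // lt_ts.
  by move: (allP le_t s s_in); rewrite /lexle lt_ts.
by rewrite lt_st IH // (path_sorted sorted_r).
Qed.

Lemma nth_count_lexge_sorted (r : seq (seq nat)) s :
  sorted lexge r -> uniq r -> s \in r -> nth [::] r (count (lexlt s) r) = s.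
Proof. by move=> sorted_r uniq_r s_in; rewrite -index_lexge_sorted ?nth_index. Qed.

End LexOrder.

Section Rectangles.

Variable n : nat.

Lemma size_mu a b : a <= n -> size (mu n a b) = n.
Proof. by move=> le_an; rewrite /mu size_cat !size_nseq; lia. Qed.

Lemma nth_mu a b r : a <= n -> r < n -> nth 0 (mu n a b) r = if r < a then n else b.
Proof.
move=> le_an lt_rn; rewrite /mu nth_cat size_nseq.
by case: ifP => lt_ra; rewrite nth_nseq ?lt_ra //; case: ifP; lia.
Qed.

Lemma mu_bounded a b : b <= n -> all (fun x => x <= n) (mu n a b).
Proof. by move=> le_bn; rewrite /mu all_cat !all_nseq leqnn le_bn !orbT. Qed.

Lemma nonempty_mu a b : 0 < n -> a <= n -> nonempty (mu n a b) = (0 < a + b).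
Proof.
by move=> n_gt0 le_an; rewrite /nonempty has_cat !has_nseq /=; lia.
Qed.

Lemma transp_mu a b : a <= n -> b <= n -> transp n (mu n a b) = mu n b a.
Proof.
move=> le_an le_bn; apply: (@eq_from_nth _ 0); first by rewrite size_map size_iota size_mu.
move=> c; rewrite size_map size_iota => lt_cn.
rewrite (nth_map 0) ?size_iota // nth_iota // nth_mu // /mu count_cat !count_nseq /=.
by case: (ltnP c b); case: (ltnP c n); lia.
Qed.

Definition mu_key (a b k : nat) : nat := if k < n - a then n + n - b - k else n - k.

Lemma dkey_mu a b : a <= n -> b <= n -> dkey n (mu n a b) = map (mu_key a b) (iota 0 n).
Proof.
move=> le_an le_bn; apply: (@eq_from_nth _ 0); first by rewrite size_rev !size_map !size_iota.
move=> k; rewrite size_rev size_map size_iota => lt_kn.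
rewrite /dkey /subset_of nth_rev ?size_map ?size_iota // !(nth_map 0) ?size_iota; try lia.
rewrite !nth_iota ?nth_mu /mu_key; try lia.
by case: ifP; case: ifP; lia.
Qed.

Lemma dkey_inj l l' : size l = n -> size l' = n ->
  all (fun x => x <= n) l -> all (fun x => x <= n) l' -> dkey n l = dkey n l' -> l = l'.
Proof.
move=> size_l size_l' /(all_nthP 0) bnd_l /(all_nthP 0) bnd_l' /(inv_inj (@revK _)) eq_ll'.
apply: (@eq_from_nth _ 0) => [|r]; first by rewrite size_l size_l'.
rewrite size_l => lt_rn; have := congr1 (nth 0 ^~ r) eq_ll'.
rewrite /= !(nth_map 0) ?size_iota // nth_iota // add0n.
have := bnd_l r; have := bnd_l' r; rewrite size_l size_l'; lia.
Qed.

Lemma dkey_mu_inj a b c d : a <= n -> b <= n -> c <= n -> d <= n ->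
  dkey n (mu n a b) = dkey n (mu n c d) -> mu n a b = mu n c d.
Proof. by move=> *; apply: dkey_inj; rewrite ?size_mu ?mu_bounded. Qed.

Lemma orepE l : orep n l = dkey n l \/ orep n l = dkey n (transp n l).
Proof. by rewrite /orep; case: ifP; [right | left]. Qed.

Lemma orep_lexlt x l :
  lexlt x (orep n l) = lexlt x (dkey n l) || lexlt x (dkey n (transp n l)).
Proof.
rewrite /orep; case: ifP => lt_key.
  by apply/idP/orP => [| [/lexlt_trans-> |]]; auto.
by apply/idP/orP => [| [| /lexlt_le_trans->]]; rewrite /lexle ?lt_key; auto.
Qed.

Lemma orep_muC a b : a <= n -> b <= n -> orep n (mu n a b) = orep n (mu n b a).
Proof.
move=> le_an le_bn; rewrite /orep !transp_mu //.
case: (eqVneq (dkey n (mu n a b)) (dkey n (mu n b a))) => [-> | ne]; first by rewrite lexlt_irr.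
by case/orP: (lexlt_total ne) => lt; rewrite lt (lexlt_asym lt).
Qed.

Lemma eq_orep_mu a b c d : a <= n -> b <= n -> c <= n -> d <= n ->
  (orep n (mu n a b) == orep n (mu n c d)) = (mu n a b == mu n c d) || (mu n a b == mu n d c).
Proof.
move=> le_an le_bn le_cn le_dn; apply/eqP/orP => [| [/eqP-> | /eqP->]]; last 2 first.
- by [].
- by rewrite orep_muC.
have transpI x y z w : x <= n -> y <= n -> z <= n -> w <= n ->
    mu n x y = mu n z w -> mu n y x = mu n w z.
  by move=> ? ? ? ? eq_mu; rewrite -transp_mu // eq_mu transp_mu.
case: (orepE (mu n a b)) => ->; case: (orepE (mu n c d)) => ->;
  rewrite ?transp_mu // => /dkey_mu_inj eq_mu.
- by left; apply/eqP/eq_mu.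
- by right; apply/eqP/eq_mu.
- by right; apply/eqP/transpI/eq_mu.
- by left; apply/eqP/transpI/eq_mu.
Qed.

End Rectangles.

Ltac key_lia :=
  rewrite /mu_key; repeat match goal with
  | |- context [if ?x < ?y then _ else _] => case: (ltnP x y) => ?
  end; lia.

Ltac key_witness k :=
  apply: (@lexlt_map_iota _ _ 0 _ k); [lia | key_lia | move=> ? ?; key_lia].

Section Rows.

Variable n : nat.

Lemma rows_sorted : sorted lexge (rows n).
Proof. by apply: sort_sorted => s t; apply: lexle_total. Qed.

Lemma rows_uniq : uniq (rows n).
Proof. by rewrite sort_uniq undup_uniq. Qed.

Lemma mem_face_labels l :
  l \in face_labels n <-> exists a b, [/\ a <= n, b <= n & l = mu n a b].
Proof.
split => [/flatten_mapP[a] | [a [b [le_an le_bn ->]]]].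
  by rewrite mem_iota => lt_a /mapP[b]; rewrite mem_iota => lt_b ->; exists a, b; split => //; lia.
by apply/flatten_mapP; exists a; rewrite ?mem_iota; [lia | apply/map_f; rewrite mem_iota; lia].
Qed.

Lemma mem_rows (n_gt0 : 0 < n) y :
  y \in rows n <-> exists a b, [/\ a <= n, b <= n, 0 < a + b & y = orep n (mu n a b)].
Proof.
rewrite mem_sort mem_undup; split => [/mapP[l] | [a [b [le_an le_bn ab_gt0 ->]]]].
  rewrite mem_filter => /andP[ne_l /mem_face_labels[a [b [le_an le_bn def_l]]]] ->.
  by exists a, b; rewrite def_l nonempty_mu in ne_l *.
apply/map_f; rewrite mem_filter nonempty_mu // ab_gt0.
by apply/mem_face_labels; exists a, b.
Qed.

Lemma lexlt_key_rect c a b : 1 <= c < n -> a <= n -> b <= n ->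
  lexlt (dkey n (mu n c 0)) (dkey n (mu n a b)) = (b == 0) && (a < c).
Proof.
move=> c_bnd le_an le_bn; rewrite !dkey_mu //; try lia.
case: (eqVneq b 0) => [-> | b_neq0] /=; last by apply: lexlt_asym; key_witness 0.
case: (ltngtP a c) => [lt_ac | lt_ca | ->]; last by rewrite lexlt_irr.
- by key_witness (n - c).
- by apply: lexlt_asym; key_witness (n - a).
Qed.

Lemma orep_rect c : 1 <= c < n -> orep n (mu n c 0) = dkey n (mu n c 0).
Proof.
move=> c_bnd; rewrite /orep transp_mu ?lexlt_key_rect //; try lia.
by case: eqP => //; lia.
Qed.

Lemma orep_hook (n_gt0 : 0 < n) : orep n (mu n 1 1) = dkey n (mu n 1 1).
Proof. by rewrite /orep transp_mu //; case: ifP. Qed.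

Lemma lexlt_key_hook (n_gt0 : 0 < n) a b : a <= n -> b <= n ->
  lexlt (dkey n (mu n 1 1)) (dkey n (mu n a b)) ->
  (b = 0 /\ a < n) \/ [/\ a = 0, b = 1 & 1 < n].
Proof.
move=> le_an le_bn; rewrite !dkey_mu // => lt_hook.
set hook := map _ _ in lt_hook; set key := map _ _ in lt_hook.
have not_lt : ~ lexlt key hook by move/lexlt_asym; rewrite lt_hook.
have not_eq : ~ (forall k, k < n -> mu_key n a b k = mu_key n 1 1 k).
  move=> eq_key; suff eq_hook : key = hook by rewrite eq_hook lexlt_irr in lt_hook.
  by apply/eq_in_map => k; rewrite mem_iota => k_bnd; apply: eq_key; lia.
case: (ltnP a n) => lt_an; last first.
  case: (ltnP 1 n) => n_gt1; first by case: not_lt; key_witness 0.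
  by case: not_eq => k lt_kn; key_lia.
case: (ltngtP b 1) => [b0 | b_gt1 | b1]; first by left; split; lia.
  by case: not_lt; key_witness 0.
case: (ltngtP a 1) => [a0 | a_gt1 | a1].
- case: (ltnP 1 n) => n_gt1; first by right; split; lia.
  by case: not_eq => k lt_kn; key_lia.
- by case: not_lt; key_witness (n - a).
- by case: not_eq => k lt_kn; rewrite a1 b1.
Qed.

Lemma lexlt_key_hook_rect a : 1 <= a < n ->
  lexlt (dkey n (mu n 1 1)) (dkey n (mu n a 0)).
Proof. by move=> a_bnd; rewrite !dkey_mu; try lia; key_witness 0. Qed.

Lemma uniq_rect_orbits m : m < n -> uniq [seq orep n (mu n k 0) | k <- iota 1 m].
Proof.
move=> lt_mn; rewrite map_inj_in_uniq ?iota_uniq // => k k'; rewrite !mem_iota => k_bnd k'_bnd.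
have key_lt i i' : 1 <= i < i' -> i' < n -> lexlt (dkey n (mu n i' 0)) (dkey n (mu n i 0)).
  by move=> *; rewrite lexlt_key_rect ?eqxx //=; lia.
rewrite !orep_rect; try lia.
case: (ltngtP k k') => // lt_kk' eq_key.
- by have := key_lt k k' ltac:(lia) ltac:(lia); rewrite eq_key lexlt_irr.
- by have := key_lt k' k ltac:(lia) ltac:(lia); rewrite eq_key lexlt_irr.
Qed.

Lemma nth_rows_above x m : x \in rows n -> m < n ->
  (forall a b, a <= n -> b <= n -> 0 < a + b -> lexlt x (orep n (mu n a b)) ->
     exists2 k, 1 <= k <= m & orep n (mu n a b) = orep n (mu n k 0)) ->
  (forall k, 1 <= k <= m -> lexlt x (orep n (mu n k 0))) ->
  nth [::] (rows n) m = x.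
Proof.
move=> x_in lt_mn above_x above_rect; have n_gt0 : 0 < n by lia.
set T := [seq orep n (mu n k 0) | k <- iota 1 m].
have T_rows : {subset T <= rows n}.
  move=> y /mapP[k]; rewrite mem_iota => k_bnd ->.
  by apply/(mem_rows n_gt0); exists k, 0; split => //; lia.
have above_xT : {in rows n, lexlt x =1 mem T}.
  move=> y /(mem_rows n_gt0)[a [b [le_an le_bn ab_gt0 ->]]] /=.
  apply/idP/mapP => [/(above_x a b le_an le_bn ab_gt0)[k k_bnd ->] | [k]].
    by exists k; rewrite // mem_iota; lia.
  by rewrite mem_iota => k_bnd ->; apply: above_rect; lia.
have -> : m = count (lexlt x) (rows n).
  rewrite (eq_in_count above_xT) count_mem_subset_uniq ?rows_uniq ?uniq_rect_orbits //.
  by rewrite size_map size_iota.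
by apply: nth_count_lexge_sorted; rewrite ?rows_sorted ?rows_uniq.
Qed.

Lemma nth_rows_rect c : 1 <= c < n -> nth [::] (rows n) c.-1 = orep n (mu n c 0).
Proof.
move=> c_bnd; rewrite (orep_rect c_bnd); apply: nth_rows_above; try lia.
- by rewrite -orep_rect //; apply/mem_rows; [lia | exists c, 0; split => //; lia].
- move=> a b le_an le_bn ab_gt0.
  rewrite orep_lexlt transp_mu // !lexlt_key_rect //.
  case/orP => /andP[/eqP b0 lt_ac]; subst.
  + by exists a => //; lia.
  + by exists b; [lia | rewrite orep_muC].
- by move=> k k_bnd; rewrite orep_lexlt lexlt_key_rect ?eqxx //=; lia.
Qed.

Lemma nth_rows_hook (n_gt0 : 0 < n) : nth [::] (rows n) n.-1 = orep n (mu n 1 1).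
Proof.
rewrite orep_hook //; apply: nth_rows_above; try lia.
- by rewrite -orep_hook //; apply/(mem_rows n_gt0); exists 1, 1; split => //; lia.
- move=> a b le_an le_bn ab_gt0; rewrite orep_lexlt transp_mu //.
  case/orP => [/(lexlt_key_hook n_gt0 le_an le_bn) | /(lexlt_key_hook n_gt0 le_bn le_an)].
  + case=> [[b0 lt_an] | [a0 b1 n_gt1]]; subst; first by exists a => //; lia.
    by exists 1; [lia | rewrite orep_muC].
  + case=> [[a0 lt_bn] | [b0 a1 n_gt1]]; subst; last by exists 1 => //; lia.
    by exists b; [lia | rewrite orep_muC].
- by move=> k k_bnd; rewrite orep_lexlt lexlt_key_hook_rect //; lia.
Qed.

End Rows.

Section Paths.

Variable n : nat.

Definition boundary (v : vtx) : bool := if v is Bd _ then true else false.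

Definition row (v : vtx) : nat := match v with Bd _ => 0 | Blk r _ | Wht r _ => r end.

Lemma mem_paths_fromS f v p : p \in paths_from n f.+1 v <->
  exists w, [/\ w \in verts n, edge n v w &
    if w is Bd _ then p = [:: w] else exists2 p', p = w :: p' & p' \in paths_from n f w].
Proof.
split => [/flatten_mapP[w] | [w [w_in e_vw p_def]]].
  rewrite mem_filter => /andP[e_vw w_in] p_in; exists w; split => //.
  by case: w p_in {e_vw w_in} => [t /[1!inE]/eqP | r c /mapP[p' ? ->] | r c /mapP[p' ? ->]];
    try exists p'.
apply/flatten_mapP; exists w; first by rewrite mem_filter e_vw.
by case: w p_def {e_vw w_in} => [t -> | r c [p' -> p'_in] | r c [p' -> p'_in]];
  rewrite ?inE ?map_f.
Qed.

Lemma Bd_in_verts t : 1 <= t <= 2 * n -> Bd t \in verts n.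
Proof. by move=> t_bnd; rewrite mem_cat map_f // mem_iota; lia. Qed.

Lemma box_in_verts r c : 1 <= r <= n -> 1 <= c <= n ->
  (Blk r c \in verts n) && (Wht r c \in verts n).
Proof.
move=> r_bnd c_bnd; rewrite !mem_cat; apply/andP; split; apply/orP; right;
  apply/flatten_mapP; exists r; rewrite ?mem_iota; try lia;
  by apply/flatten_mapP; exists c; rewrite ?mem_iota ?inE ?eqxx ?orbT; try lia.
Qed.

(* Edges of O never go south, and the boundary vertex n + r is only entered
   from row r. *)
Lemma paths_from_last_row f v p t : p \in paths_from n f v -> ~~ boundary v ->
  last v p = Bd t -> t <= n + row v.
Proof.
elim: f v p => [|f IH] v p //= /mem_paths_fromS[w [_ e_vw p_def]].
case: v e_vw => [s | r c | r c] //= e_vw _.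
  case: w p_def e_vw => [t' | r' c' | r' c'] // [p' -> p'_in] /and4P[_ _ /eqP ? /eqP ?].
  by subst; apply: IH p'_in isT.
case: w p_def e_vw => [t' -> /and3P[_ _ /eqP->] [->] | r' c' [p' -> p'_in] | r' c'] //=.
case/and3P => _ _ /orP[] /and3P[_ /eqP ? /eqP ?]; subst => /(IH _ _ p'_in isT) /=; lia.
Qed.

Lemma paths_from_Blk f r c p : 1 <= r <= n -> 1 <= c <= n ->
  p \in paths_from n f (Wht r c) -> Wht r c :: p \in paths_from n f.+1 (Blk r c).
Proof.
move=> r_bnd c_bnd p_in; apply/mem_paths_fromS; exists (Wht r c).
by have /andP[_ ->] := box_in_verts r_bnd c_bnd; rewrite /edge !eqxx !andbT; split => //;
  [apply/andP | exists p].
Qed.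

Lemma paths_from_Wht_east f r c p : 1 <= r <= n -> 1 <= c < n ->
  p \in paths_from n f (Blk r c.+1) -> Blk r c.+1 :: p \in paths_from n f.+1 (Wht r c).
Proof.
move=> r_bnd c_bnd p_in; apply/mem_paths_fromS; exists (Blk r c.+1).
have /andP[-> _] : (Blk r c.+1 \in verts n) && (Wht r c.+1 \in verts n).
  by apply: box_in_verts; lia.
by split => //; [rewrite /edge; lia | exists p].
Qed.

(* The path from box (n, n - m) eastwards along the bottom row to the boundary
   vertex 2n, without its first vertex [Wht n (n - m)]. *)
Fixpoint east_tail (m : nat) : seq vtx :=
  if m is m'.+1 then Blk n (n - m') :: Wht n (n - m') :: east_tail m' else [:: Bd (n + n)].

Lemma last_east_tail v m : last v (east_tail m) = Bd (n + n).
Proof. by elim: m v => [|m IH] v //=. Qed.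

Lemma mem_east_tail (n_gt0 : 0 < n) m v : m <= n -> v \in east_tail m ->
  (pos n v).1 = n /\ n - m < (pos n v).2.
Proof.
elim: m => [|m IH] le_mn /=; first by rewrite inE => /eqP-> /=; case: ifP => /=; lia.
by rewrite !inE => /orP[/eqP-> | /orP[/eqP-> | /(IH (ltnW le_mn))]] /=; lia.
Qed.

Lemma uniq_east_tail (n_gt0 : 0 < n) m : m <= n -> uniq (east_tail m).
Proof.
elim: m => [|m IH] le_mn //=; rewrite IH ?andbT; last by lia.
rewrite inE negb_or -andbA; apply/and3P; split => //;
  by apply/negP => /(mem_east_tail n_gt0 (ltnW le_mn)) /=; lia.
Qed.

Lemma has_east_tail (n_gt0 : 0 < n) m x y :
  has (fun v => (y < (pos n v).1) && (x < (pos n v).2)) (east_tail m) = (y < n) && (x < n.+1).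
Proof. by elim: m => [|m IH] /=; [case: ifP => /=; lia | rewrite IH; lia]. Qed.

Lemma east_tail_in_paths_from m f : m < n -> 2 * m < f ->
  east_tail m \in paths_from n f (Wht n (n - m)).
Proof.
elim: m f => [|m IH] [|f] lt_mn lt_mf; try lia.
  apply/mem_paths_fromS; exists (Bd (n + n)); rewrite Bd_in_verts /edge ?subn0 ?eqxx; try lia.
  by split => //; apply/andP; split; lia.
case: f lt_mf => [|f] lt_mf; first by lia.
have e : (n - m.+1).+1 = n - m by lia.
have blk : Wht n (n - m) :: east_tail m \in paths_from n f.+1 (Blk n (n - m)).
  by apply: paths_from_Blk; [lia | lia | apply: IH; lia].
by rewrite [east_tail m.+1]/= -e in blk *; apply: paths_from_Wht_east blk; lia.
Qed.

Lemma paths_from_bottom_to_corner f :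
  (forall c p, 1 <= c <= n -> p \in paths_from n f (Wht n c) ->
     last (Wht n c) p = Bd (n + n) -> p = east_tail (n - c)) /\
  (forall c p, 1 <= c <= n -> p \in paths_from n f (Blk n c) ->
     last (Blk n c) p = Bd (n + n) -> p = Wht n c :: east_tail (n - c)).
Proof.
elim: f => [|f [IH_Wht IH_Blk]]; first by split.
split=> c p c_bnd /mem_paths_fromS[w [_ e_vw p_def]].
  case: w p_def e_vw => [t -> /and3P[_ /eqP-> /eqP->] | r' c' [p' -> p'_in] | r' c'] //=.
    by rewrite subnn.
  case/and3P => _ _ /orP[] /and3P[? /eqP ? /eqP ?]; subst => last_p'.
    by have := paths_from_last_row p'_in isT last_p'; rewrite /=; lia.
  rewrite (IH_Blk _ _ _ p'_in last_p'); last by lia.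
  have -> : n - c = (n - c.+1).+1 by lia.
  by rewrite /= (_ : n - (n - c.+1) = c.+1) //; lia.
case: w p_def e_vw => [t | r' c' | r' c' [p' -> p'_in]] //= /and4P[_ _ /eqP ? /eqP ?].
by subst => /(IH_Wht _ _ c_bnd p'_in) ->.
Qed.

End Paths.

Section FirstColumns.

Variables n k : nat.
Hypothesis lt_kn : k < n.

Let n_gt0 : 0 < n := leq_ltn_trans (leq0n k) lt_kn.

Definition bottom_path : seq vtx := Bd k.+1 :: east_tail n k.+1.

Local Notation J := (subset_of n (lam n 0 k)).

Lemma bottom_path_in_paths : bottom_path \in paths n k.+1.
Proof.
have box_k : (Blk n (n - k) \in verts n) && (Wht n (n - k) \in verts n).
  by apply: box_in_verts; lia.
have lt_k_nn : k < n * n by nia.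
apply: map_f; rewrite addn2.
apply/mem_paths_fromS; exists (Blk n (n - k)); split.
- by case/andP: box_k.
- by rewrite /edge; lia.
- exists (Wht n (n - k) :: east_tail n k) => //.
  by apply: paths_from_Blk; [lia | lia | apply: east_tail_in_paths_from; lia].
Qed.

Lemma path_to_corner P : P \in paths n k.+1 -> last (Bd 0) P = Bd (n + n) -> P = bottom_path.
Proof.
move=> /mapP[p p_in ->] /= last_p; move: p_in; rewrite addn2.
case/mem_paths_fromS => w [_ e_vw p_def].
case: w e_vw p_def last_p => [t | r c | r c] //= /and3P[_ /eqP ? /eqP ?] [p' -> p'_in] last_p'.
subst; have [_ to_corner] := @paths_from_bottom_to_corner n (2 * n * n).+1.
rewrite (to_corner _ _ _ p'_in last_p') subSS; last by lia.
by rewrite /bottom_path (_ : n - (n - k) = k) //; lia.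
Qed.

Lemma uniq_bottom_path : uniq bottom_path.
Proof.
rewrite /bottom_path cons_uniq uniq_east_tail // andbT.
by apply/negP => /(mem_east_tail n_gt0 lt_kn) /=; case: ifP => /=; lia.
Qed.

Lemma subset_of_lam0 : J = iota 1 k ++ iota k.+2 (n - 1 - k) ++ [:: n + n].
Proof.
apply: (@eq_from_nth _ 0) => [|r]; first by rewrite size_map !size_cat !size_iota /=; lia.
rewrite size_map size_iota => lt_rn.
rewrite (nth_map 0) ?size_iota // nth_iota // add0n /lam.
rewrite !nth_cat !size_nseq !size_iota.
case: (ltnP r k) => lt_rk; first by rewrite nth_nseq lt_rk nth_iota; lia.
case: (ltnP (r - k) (n - 1 - k)) => lt_r; first by rewrite !nth_nseq lt_r nth_iota; lia.
by rewrite (_ : r - k - (n - 1 - k) = 0) /=; lia.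
Qed.

Lemma sources_lam0 : sources n J = [:: k.+1].
Proof.
rewrite /sources subset_of_lam0 (@eq_in_filter _ _ (pred1 k.+1)).
  by rewrite filter_pred1_uniq ?iota_uniq // mem_iota; lia.
by move=> s; rewrite mem_iota !mem_cat !mem_iota !inE => s_bnd; lia.
Qed.

Lemma sinks_lam0 : sinks n J = [:: n + n].
Proof.
rewrite /sinks subset_of_lam0 !filter_cat.
have no_sink s : {in s, forall t, t <= n} -> [seq t <- s | n < t] = [::].
  by move=> le_s; rewrite (@eq_in_filter _ _ pred0) ?filter_pred0 // => t /le_s /=; lia.
rewrite (no_sink (iota 1 k)) => [|t]; last by rewrite mem_iota; lia.
rewrite (no_sink (iota k.+2 _)) => [|t]; last by rewrite mem_iota; lia.
by rewrite /= ifT //; lia.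
Qed.

Lemma mem_flows_lam0 F : (F \in flows n J) = (F == [:: bottom_path]).
Proof.
rewrite /flows sources_lam0 sinks_lam0 /= mem_filter.
apply/andP/eqP => [[/andP[perm_last _] /flatten_mapP[P P_in]] | ->].
  rewrite inE => /eqP def_F; move: perm_last; rewrite def_F /= => /perm_mem/(_ (last (Bd 0) P)).
  by rewrite !inE eqxx => /esym/eqP/(path_to_corner P_in) ->.
split; last by apply/flatten_mapP; exists bottom_path; rewrite ?bottom_path_in_paths ?inE.
rewrite [flatten _]/= cats0 uniq_bottom_path // andbT.
by rewrite /= last_east_tail.
Qed.

Lemma msupp_flowpoly_lam0 : msupp (flowpoly n J) = [:: flow_mon n [:: bottom_path]].
Proof.
have bottom_in : [:: bottom_path] \in flows n J by rewrite mem_flows_lam0.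
rewrite /flowpoly big_seq (eq_bigr (fun=> 'X_[flow_mon n [:: bottom_path]])) => [|F].
  rewrite -big_seq big_const_seq count_predT iter_addr_0 -scaler_nat msuppMCX //.
  by rewrite Num.Theory.pnatr_eq0 -lt0n; case: (flows n J) bottom_in.
by rewrite mem_flows_lam0 => /eqP->.
Qed.

Lemma val_corect_lam0 : val_corect n J =
  [seq (flow_mon n [:: bottom_path] : 'X_{1..nvar n}) i | i <- enum 'I_(nvar n)].
Proof. by rewrite /val_corect msupp_flowpoly_lam0. Qed.

Lemma has_bottom_path x y : x <= n -> y <= n ->
  has (fun v => (y < (pos n v).1) && (x < (pos n v).2)) bottom_path = (y < n) || (x < n - k).
Proof. by move=> le_xn le_yn; rewrite /bottom_path /= has_east_tail // /= ifT //=; lia. Qed.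

Lemma mem_left_faces_bottom l : l \in left_faces n bottom_path <->
  exists x y, [/\ x <= n, y <= n, (y < n) || (x < n - k) & l = mu n (n - x) (n - y)].
Proof.
rewrite /left_faces mem_undup; split => [/flatten_mapP[x] | [x [y [le_xn le_yn left_xy ->]]]].
  rewrite mem_iota => x_bnd /mapP[y]; rewrite mem_filter mem_iota => /andP[left_xy y_bnd] ->.
  rewrite has_bottom_path in left_xy; try lia.
  by exists x, y; split => //; lia.
apply/flatten_mapP; exists x; rewrite ?mem_iota; first by lia.
by apply: map_f; rewrite mem_filter mem_iota has_bottom_path // left_xy; lia.
Qed.

Lemma count_orbit_left_faces c d : c <= n -> d <= n -> 0 < c + d ->
  count (fun l => nonempty l && (orep n l == orep n (mu n c d))) (left_faces n bottom_path) =
  count (pred2 (mu n c d) (mu n d c)) (left_faces n bottom_path).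
Proof.
move=> le_cn le_dn cd_gt0; apply: eq_in_count => l /mem_left_faces_bottom[x [y [le_xn le_yn _ ->]]].
rewrite eq_orep_mu /=; try lia.
by case: orP => [[] /eqP-> | _]; rewrite ?andbF // nonempty_mu //; lia.
Qed.

Lemma mem_left_faces_rect c : 1 <= c < n ->
  (mu n c 0 \in left_faces n bottom_path) = (k < c).
Proof.
move=> c_bnd; apply/idP/idP => [/mem_left_faces_bottom[x [y [le_xn le_yn left_xy eq_mu]]] | lt_kc].
  have := congr1 (nth 0 ^~ n.-1) eq_mu; have := congr1 (nth 0 ^~ c) eq_mu.
  by rewrite /= !nth_mu; try lia; case: ifP; case: ifP; case: ifP; case: ifP; lia.
apply/mem_left_faces_bottom; exists (n - c), n.
by rewrite subnn (_ : n - (n - c) = c); [split => //; lia | lia].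
Qed.

Lemma mem_left_faces_rectT c : 1 <= c <= n -> mu n 0 c \in left_faces n bottom_path.
Proof.
move=> c_bnd; apply/mem_left_faces_bottom; exists n, (n - c).
by rewrite subnn (_ : n - (n - c) = c); [split => //; lia | lia].
Qed.

Lemma mem_left_faces_hook : mu n 1 1 \in left_faces n bottom_path.
Proof.
apply/mem_left_faces_bottom; exists n.-1, n.-1.
by rewrite (_ : n - n.-1 = 1); [split => //; lia | lia].
Qed.

Lemma count_orbit_rect c : 1 <= c < n ->
  count (fun l => nonempty l && (orep n l == orep n (mu n c 0))) (left_faces n bottom_path) =
  1 + (k < c).
Proof.
move=> c_bnd; have ne_mu : mu n c 0 != mu n 0 c.
  apply/eqP => /(congr1 (nth 0 ^~ n.-1)) /=; rewrite !nth_mu; try lia.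
  by rewrite ltn0 ifF; lia.
rewrite count_orbit_left_faces ?count_pred2_uniq ?undup_uniq //; try lia.
by rewrite mem_left_faces_rect ?mem_left_faces_rectT; lia.
Qed.

Lemma count_orbit_hook :
  count (fun l => nonempty l && (orep n l == orep n (mu n 1 1))) (left_faces n bottom_path) = 1.
Proof.
rewrite (@count_orbit_left_faces 1 1) // (@eq_count _ _ (pred1 (mu n 1 1))) => [|l]; last exact: orbb.
by rewrite count_uniq_mem ?undup_uniq ?mem_left_faces_hook.
Qed.

End FirstColumns.

Lemma col_index_nth n j : j < n -> nth (0, 0) (col_index n) j = (0, n - j.+1).
Proof.
case: n => // n lt_jn; rewrite /col_index /= -[0 :: iota 1 n]/(iota 0 n.+1).
rewrite nth_cat size_map size_rev size_iota lt_jn (nth_map 0) ?size_rev ?size_iota //.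
by rewrite nth_rev ?size_iota // nth_iota //; lia.
Qed.

Theorem mainTheorem5 (n : nat) (i j : 'I_(nvar n)) :
  1 <= n -> i < n -> j < n ->
  Mn n i j = (if i.+1 == n then 1 else if j.+1 <= n - i.+1 then 1 else 2).
Proof.
move=> n_gt0 lt_in lt_jn; have lt_kn : n - j.+1 < n by lia.
rewrite /Mn mxE col_index_nth //= val_corect_lam0 // (nth_map i) ?size_enum_ord //.
rewrite nth_ord_enum mnmE /flow_exp big_seq1.
case: (eqVneq i.+1 n) => [i_last | i_lt].
  by rewrite (_ : nat_of_ord i = n.-1) ?nth_rows_hook ?count_orbit_hook //; lia.
rewrite -[nat_of_ord i]/(i.+1.-1) nth_rows_rect ?count_orbit_rect //; try lia.
by case: ifP; case: ltnP; lia.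
Qed.
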